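(* Let $\mathcal C,\mathcal C^0,\mathcal C_\gamma$ be as defined in the context. Then $\mathcal C\subset\mathcal C^0$ and $\mathcal C\subset\mathcal C_\gamma$ for all $\gamma\geq0$. Moreover, if $G\in\mathcal C^0\setminus\mathcal C$, then there is $\gamma_*(G)>0$ such that $G\in\mathcal C_\gamma$ for all $\gamma\in[0,\gamma_*(G))$.
   Context: $\mathcal{G}$ is the set of finite, simple, connected, undirected, edge-weighted graphs $G=(V,E,\omega)$ with $V=\{1,\dots,n\}$, $n\geq2$, weights $\omega_{ij}=\omega_{ji}>0$ on edges, $0$ otherwise. $d_i=\sum_j\omega_{ij}$. Fixed $r\in[0,1]$: for $u:V\to\mathbb R$, $(\Delta u)_i=d_i^{-r}\sum_j\omega_{ij}(u_i-u_j)$, $\mathcal M(u)=\sum_id_i^ru_i$, $\mathrm{vol}(V)=\sum_id_i^r$, $\mathcal A(u)=\frac{\mathcal M(u)}{\mathrm{vol}(V)}\chi_V$. Equilibrium measure $\nu^S$ ($S\subsetneq V$): unique $\nu:V\to\mathbb R$ with $(\Delta\nu)_i=1$ on $S$, $\nu=0$ off $S$. $f^j:=\nu^{V\setminus\{j\}}-\mathcal A(\nu^{V\setminus\{j\}})$. $\mathcal C=\{G\in\mathcal G:\forall j\in V\ \forall i\in V\setminus\{j\}:\ f^j_i\geq0\}$; $\mathcal C^0=\{G\in\mathcal G:\forall j\ \forall i\neq j:\ \omega_{ij}>0\text{ or }f^j_i\geq0\}$; for $\gamma>0$, $\mathcal C_\gamma=\{G\in\mathcal C^0:\forall j\ \forall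 i\neq j:\ \omega_{ij}=0\text{ or }d_i^{-r}\omega_{ij}+\gamma\frac{d_j^r}{\mathrm{vol}(V)}f^j_i>0\}$; $\mathcal C_0:=\mathcal G$. *)

From HB Require Import structures.
From mathcomp Require Import all_boot all_order all_algebra.
From mathcomp Require Import all_classical all_reals.
From mathcomp Require Import exp.
Set Implicit Arguments. Unset Strict Implicit. Unset Printing Implicit Defensive.
Import Order.TTheory GRing.Theory Num.Theory.
Local Open Scope ring_scope.

Section Graphs.
Variable R : realType.
Variable n : nat.
Implicit Types (w : 'I_n -> 'I_n -> R) (u : 'I_n -> R) (r : R).

Definition edge w : rel 'I_n := fun i j => 0 < w i j.

Definition is_graph w : Prop :=
  [/\ (2 <= n)%N,
      (forall i j, w i j = w j i),
      (forall i j, 0 <= w i j),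
      (forall i, w i i = 0)
    & (forall i j, connect (edge w) i j)].

Definition deg w i : R := \sum_(j < n) w i j.

Definition degr r w i : R := powR (deg w i) r.

Definition lap r w u i : R := (degr r w i)^-1 * \sum_(j < n) w i j * (u i - u j).

Definition mass r w u : R := \sum_(i < n) degr r w i * u i.
Definition vol r w : R := \sum_(i < n) degr r w i.

(* A(u) is the constant function with value M(u)/vol(V) *)
Definition avg r w u : R := mass r w u / vol r w.

Definition is_equilibrium r w (S : {set 'I_n}) (nu : 'I_n -> R) : Prop :=
  (forall i, i \in S -> lap r w nu i = 1) /\ (forall i, i \notin S -> nu i = 0).

Definition fj r w (nu : 'I_n -> R) i : R := nu i - avg r w nu.

Definition inC r w : Prop :=
  forall j nu, is_equilibrium r w [set~ j] nu ->
    forall i, i != j -> 0 <= fj r w nu i.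

Definition inC0 r w : Prop :=
  forall j nu, is_equilibrium r w [set~ j] nu ->
    forall i, i != j -> 0 < w i j \/ 0 <= fj r w nu i.

Definition inCpos r w (g : R) : Prop :=
  inC0 r w /\
  forall j nu, is_equilibrium r w [set~ j] nu ->
    forall i, i != j ->
      w i j = 0 \/
      0 < (degr r w i)^-1 * w i j + g * (degr r w j / vol r w) * fj r w nu i.

(* C_gamma for gamma >= 0, with C_0 := \mathcal G *)
Definition inCgamma r w (g : R) : Prop := g = 0 \/ (0 < g /\ inCpos r w g).

End Graphs.

From HB Require Import structures.
From mathcomp Require Import all_boot all_order all_algebra.
From mathcomp Require Import all_classical all_reals.
From mathcomp Require Import exp ring lra.
Set Implicit Arguments. Unset Strict Implicit. Unset Printing Implicit Defensive.
Import Order.TTheory GRing.Theory Num.Theory.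
Local Open Scope ring_scope.

(* The equilibrium measure of V \ {j} is unique, by the maximum principle for
   functions harmonic off the single pole j on a connected graph.  Hence for
   each pair (i, j) the quantity d_i^-r w_ij + g d_j^r / vol(V) f^j_i is a
   fixed affine function of g, positive at g = 0 whenever w_ij > 0, so it
   stays positive for all small g > 0; finitely many pairs give a uniform
   threshold gamma_*.  If G is in C, then f^j_i >= 0 and the quantity is
   positive for every g > 0. *)

Lemma uniform_small_bound (R : realDomainType) (T : finType) (P : T -> R -> Prop) :
  (forall t, exists b, 0 < b /\ forall g, 0 < g < b -> P t g) ->
  exists b, 0 < b /\ forall g, 0 < g < b -> forall t, P t g.
Proof.
move=> /boolp.choice[b b_small]; exists (\big[Order.min/1]_t b t); split.
  by apply/bigmin_gtP; split=> // t _; have [] := b_small t.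
move=> g /andP[g_gt0 /bigmin_gtP[_ g_lt_b]] t.
by have [_] := b_small t; apply; rewrite g_gt0 g_lt_b.
Qed.

Lemma small_perturbation_gt0 (R : realFieldType) (a c f g : R) :
  0 < a -> 0 <= c -> 0 <= g < a / (1 + c * `|f|) -> 0 < a + g * c * f.
Proof.
move=> a_gt0 c_ge0 /andP[g_ge0]; have cf_ge0 : 0 <= c * `|f| by rewrite mulr_ge0.
have cf1_gt0 : 0 < 1 + c * `|f| by rewrite ltr_pwDl.
rewrite ltr_pdivlMr // => g_lt.
have : 0 <= g * c * (f + `|f|).
  by rewrite mulr_ge0 ?mulr_ge0 // -lerBlDr sub0r lerNnormlW.
nra.
Qed.

Lemma degr_gt0 (R : realType) (n : nat) (r : R) (w : 'I_n -> 'I_n -> R) i j :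
  (forall l, 0 <= w i l) -> 0 < w i j -> 0 < degr r w i.
Proof.
move=> w_ge0 wij_gt0; apply: powR_gt0.
rewrite /deg (bigD1 j) //=; apply: (lt_le_trans wij_gt0).
by rewrite lerDl sumr_ge0.
Qed.

Lemma vol_ge0 (R : realType) (n : nat) (r : R) (w : 'I_n -> 'I_n -> R) :
  0 <= vol r w.
Proof. by rewrite sumr_ge0 // => i _; rewrite powR_ge0. Qed.

Section Equilibrium.
Variables (R : realType) (n : nat) (r : R) (w : 'I_n -> 'I_n -> R).
Hypothesis graph_w : is_graph w.

Lemma harmonic_le_pole (u : 'I_n -> R) j :
  (forall k, k != j -> \sum_(l < n) w k l * (u k - u l) = 0) ->
  forall k, u k <= u j.
Proof.
case: graph_w => _ w_sym w_ge0 _ w_conn u_harm.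
have [k0 _ k0_max] := @arg_maxP _ _ 'I_n j xpredT u isT.
suff /eqP -> : u j == u k0 by move=> k; apply: k0_max.
apply/negPn/negP => ujk0.
pose M := [pred k | u k == u k0].
have edge_sym : symmetric (edge w) by move=> a b; rewrite /edge w_sym.
(* At a maximum point a != j the harmonic sum has only nonnegative terms. *)
have M_closed : closed (edge w) M.
  apply: (intro_closed (sym_connect_sym edge_sym)) => a b ab; rewrite !inE.
  move=> /eqP ua; have aj : a != j by apply: contraNneq ujk0 => <-; rewrite ua.
  have terms_ge0 l : true -> 0 <= w a l * (u a - u l).
    by rewrite mulr_ge0 // ua subr_ge0; apply: k0_max.
  have /eqP := psumr_eq0P terms_ge0 (u_harm a aj) (i:=b) isT.
  rewrite mulf_eq0 subr_eq0 (gt_eqF ab) /= => /eqP <-.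
  by rewrite ua.
by move: (closed_connect M_closed (w_conn k0 j)); rewrite !inE eqxx (negbTE ujk0).
Qed.

Lemma equilibrium_diff_harmonic j nu1 nu2 :
  is_equilibrium r w [set~ j] nu1 -> is_equilibrium r w [set~ j] nu2 ->
  forall k, k != j ->
  \sum_(l < n) w k l * ((nu1 k - nu2 k) - (nu1 l - nu2 l)) = 0.
Proof.
move=> [lap1 _] [lap2 _] k kj; have kS : k \in [set~ j] by rewrite in_setC1.
have := lap1 k kS; rewrite -(lap2 k kS) /lap.
have degr_neq0 : (degr r w k)^-1 != 0.
  apply/eqP => deg0; have /eqP := lap1 k kS.
  by rewrite /lap deg0 mul0r eq_sym oner_eq0.
move=> /(mulfI degr_neq0) sum_eq.
rewrite (eq_bigr (fun l => w k l * (nu1 k - nu1 l) - w k l * (nu2 k - nu2 l))).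
  by rewrite sumrB sum_eq subrr.
by move=> l _; ring.
Qed.

Lemma equilibrium_le j nu1 nu2 :
  is_equilibrium r w [set~ j] nu1 -> is_equilibrium r w [set~ j] nu2 ->
  forall k, nu1 k <= nu2 k.
Proof.
move=> eq1 eq2 k; rewrite -subr_le0.
have jS : j \notin [set~ j] by rewrite in_setC1 eqxx.
have <- : nu1 j - nu2 j = 0 by rewrite eq1.2 // eq2.2 // subrr.
exact: harmonic_le_pole (equilibrium_diff_harmonic eq1 eq2) k.
Qed.

Lemma equilibrium_unique j nu1 nu2 :
  is_equilibrium r w [set~ j] nu1 -> is_equilibrium r w [set~ j] nu2 ->
  nu1 = nu2.
Proof.
move=> eq1 eq2; apply/funext => k.
by apply/le_anti; rewrite !(equilibrium_le eq1 eq2, equilibrium_le eq2 eq1).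
Qed.

Definition Cgamma_at (g : R) (j i : 'I_n) : Prop :=
  forall nu, is_equilibrium r w [set~ j] nu -> i != j ->
    w i j = 0 \/
    0 < (degr r w i)^-1 * w i j + g * (degr r w j / vol r w) * fj r w nu i.

Lemma Cgamma_at_small j i :
  exists b, 0 < b /\ forall g, 0 < g < b -> Cgamma_at g j i.
Proof.
have w_ge0 : forall a b, 0 <= w a b by case: graph_w.
have [wij0|wij_neq0] := eqVneq (w i j) 0; first by exists 1; split=> // g _ nu _ _; left.
have [[nu0 eq0]|no_eq] := boolp.pselect (exists nu, is_equilibrium r w [set~ j] nu);
  last by exists 1; split=> // g _ nu eq_nu; case: no_eq; exists nu.
have wij_gt0 : 0 < w i j by rewrite lt_def wij_neq0 w_ge0.
set a := (degr r w i)^-1 * w i j; set c := degr r w j / vol r w.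
have a_gt0 : 0 < a by rewrite mulr_gt0 // invr_gt0 (degr_gt0 _ _ wij_gt0).
have c_ge0 : 0 <= c by rewrite divr_ge0 ?powR_ge0 ?vol_ge0.
exists (a / (1 + c * `|fj r w nu0 i|)); split.
  by rewrite divr_gt0 // ltr_pwDl // mulr_ge0.
move=> g /andP[g_gt0 g_lt] nu eq_nu _; right.
rewrite (equilibrium_unique eq_nu eq0) -/a -/c.
by apply: small_perturbation_gt0; rewrite ?(ltW g_gt0).
Qed.

Lemma inC_inC0 : inC r w -> inC0 r w.
Proof. by move=> wC j nu eq_nu i ij; right; apply: wC eq_nu i ij. Qed.

Lemma inC_inCpos g : 0 < g -> inC r w -> inCpos r w g.
Proof.
move=> g_gt0 wC; split; first exact: inC_inC0.
move=> j nu eq_nu i ij; have [|wij_neq0] := eqVneq (w i j) 0; [by left | right].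
have w_ge0 : forall a b, 0 <= w a b by case: graph_w.
have wij_gt0 : 0 < w i j by rewrite lt_def wij_neq0 w_ge0.
have : 0 < (degr r w i)^-1 * w i j.
  by rewrite mulr_gt0 // invr_gt0 (degr_gt0 _ (w_ge0 i) wij_gt0).
have : 0 <= g * (degr r w j / vol r w) * fj r w nu i.
  apply: mulr_ge0; last exact: wC j nu eq_nu i ij.
  by rewrite mulr_ge0 ?divr_ge0 ?powR_ge0 ?vol_ge0 // ltW.
by move=> B_ge0 A_gt0; apply: lt_le_trans A_gt0 _; rewrite lerDl.
Qed.

Lemma inCpos_small :
  inC0 r w -> exists gs, 0 < gs /\ forall g, 0 < g < gs -> inCpos r w g.
Proof.
move=> wC0.
have [gs [gs_gt0 gs_small]] :=
  @uniform_small_bound _ _ (fun p g => Cgamma_at g p.1 p.2) (fun p => Cgamma_at_small p.1 p.2).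
exists gs; split=> // g g_small; split=> // j nu eq_nu i.
exact: (gs_small g g_small (j, i)).
Qed.

End Equilibrium.

Theorem lemma6p3 (R : realType) (n : nat) (r : R) (w : 'I_n -> 'I_n -> R) :
  0 <= r <= 1 -> is_graph w ->
  [/\ (inC r w -> inC0 r w),
      (forall g : R, 0 <= g -> inC r w -> inCgamma r w g)
    & (inC0 r w -> ~ inC r w ->
       exists gs : R, 0 < gs /\ (forall g : R, 0 <= g < gs -> inCgamma r w g))].
Proof.
move=> _ graph_w; split; first exact: inC_inC0.
  move=> g g_ge0 wC; have [->|g_neq0] := eqVneq g 0; [by left | right].
  have g_gt0 : 0 < g by rewrite lt_def g_neq0.
  by split=> //; apply: inC_inCpos.
move=> wC0 _; have [gs [gs_gt0 gs_small]] := inCpos_small graph_w wC0.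
exists gs; split=> // g /andP[g_ge0 g_lt].
have [->|g_neq0] := eqVneq g 0; [by left | right].
have g_gt0 : 0 < g by rewrite lt_def g_neq0.
by split=> //; apply: gs_small; rewrite g_gt0.
Qed.
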